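(* Let $\mathfrak s$ be a finite-dimensional real solvable Lie algebra with an abelian complex structure $J$, and suppose $\mathfrak s=\mathfrak u+J\mathfrak u$ for some abelian ideal $\mathfrak u$ of $\mathfrak s$. Let $\mathfrak z$ be the center of $\mathfrak s$ (which is $J$-stable). Then $(\mathfrak s/\mathfrak z, J)$, with the induced complex structure, is holomorphically isomorphic to $(\mathfrak{aff}(A),J_{\mathrm{aff}})$ for some finite-dimensional real commutative associative algebra $A$, where $J_{\mathrm{aff}}(a,b)=(b,-a)$.
   Context: An abelian complex structure on a real Lie algebra $\mathfrak g$ is a linear map $J$ with $J^2=-\mathrm{Id}$ and $[Jx,Jy]=[x,y]$ for all $x,y\in\mathfrak g$. For a commutative associative algebra $A$, $\mathfrak{aff}(A)$ is the Lie algebra $A\oplus A$ with bracket $[(a,b),(a',b')]=(aa'-a'a,\ ab'-a'b)=(0,ab'-a'b)$. A holomorphic isomorphism between $(\mathfrak g_1,J_1)$ and $(\mathfrak g_2,J_2)$ is a Lie algebra isomorphism $f$ with $f J_1=J_2 f$. *)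

From HB Require Import structures.
From mathcomp Require Import all_boot all_order all_algebra.
From mathcomp Require Import reals.
Set Implicit Arguments. Unset Strict Implicit. Unset Printing Implicit Defensive.
Import Order.TTheory GRing.Theory Num.Theory.
Local Open Scope ring_scope.

Section LieDefs.
Variables (R : fieldType) (V : vectType R).

Definition bilinear_op (br : V -> V -> V) : Prop :=
  (forall (a : R) (x y z : V), br (a *: x + y) z = a *: br x z + br y z) /\
  (forall (a : R) (x y z : V), br z (a *: x + y) = a *: br z x + br z y).

Definition is_lie_bracket (br : V -> V -> V) : Prop :=
  [/\ bilinear_op br,
      (forall x, br x x = 0) &
      (forall x y z, br x (br y z) + br y (br z x) + br z (br x y) = 0)].

Definition lie_comm (br : V -> V -> V) (U W : {vspace V}) : {vspace V} :=
  (<<[seq br u w | u <- vbasis U, w <- vbasis W]>>)%VS.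

Definition derived (br : V -> V -> V) (k : nat) : {vspace V} :=
  iter k (fun U => lie_comm br U U) fullv.

Definition lie_solvable (br : V -> V -> V) : Prop :=
  exists k, derived br k = 0%VS.

Definition is_linear (J : V -> V) : Prop :=
  forall (a : R) (x y : V), J (a *: x + y) = a *: J x + J y.

Definition abelian_complex_structure (br : V -> V -> V) (J : V -> V) : Prop :=
  [/\ is_linear J, (forall x, J (J x) = - x) &
      (forall x y, br (J x) (J y) = br x y)].

Definition abelian_ideal (br : V -> V -> V) (U : {vspace V}) : Prop :=
  (forall u v, u \in U -> v \in U -> br u v = 0) /\
  (forall x u, u \in U -> br x u \in U).

Definition in_center (br : V -> V -> V) (x : V) : Prop := forall y, br x y = 0.

End LieDefs.

(* A finite-dimensional (not necessarily unital) commutative associative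
   R-algebra: a vectType A with a bilinear, commutative, associative product. *)
Definition is_comm_assoc_product (R : fieldType) (A : vectType R)
  (m : A -> A -> A) : Prop :=
  [/\ bilinear_op m, (forall a b, m a b = m b a) &
      (forall a b c, m a (m b c) = m (m a b) c)].

Definition aff_bracket (R : fieldType) (A : vectType R) (m : A -> A -> A)
  (p q : A * A) : A * A := (0, m p.1 q.2 - m q.1 p.2).

Definition J_aff (R : fieldType) (A : vectType R) (p : A * A) : A * A :=
  (p.2, - p.1).

From HB Require Import structures.
From mathcomp Require Import all_boot all_order all_algebra.
From mathcomp Require Import reals.
Import GRing.Theory.
Local Open Scope ring_scope.
Set Implicit Arguments.

(* Since u is an abelian ideal and J is abelian, u * v := [Ju, v] is a
   commutative product on u, and the Jacobi identity makes it associative.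
   Writing every x in s as u1 + J u2 with u1, u2 in u, the map
   x |-> (u2, u1) turns the bracket of s into that of aff(u) and J into
   J_aff; the ambiguity of the decomposition is exactly u ∩ z, so the map
   is well defined, with kernel z, once u is replaced by A := u / (u ∩ z). *)

Section ComplementProjection.
Variables (K : fieldType) (vT : vectType K) (U Z : {vspace vT}).

(* U :\: Z is a complement of Z in U + Z and stands for the quotient. *)
Definition quot_proj : 'Hom(vT, subvs_of (U :\: Z)) :=
  (linfun (vsproj (U :\: Z)) \o addv_pi1 U Z)%VF.

Lemma val_quot_proj v : vsval (quot_proj v) = addv_pi1 U Z v.
Proof. by rewrite comp_lfunE lfunE /= vsprojK // memv_pi. Qed.

Lemma quot_proj_val w : quot_proj (vsval w) = w.
Proof.
apply: subvs_inj; rewrite val_quot_proj /addv_pi1 daddv_pi_id ?capv_diff //.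
exact: subvsP.
Qed.

Lemma val_quot_projB u : (u \in U + Z)%VS -> vsval (quot_proj u) - u \in Z.
Proof.
move=> UZu; rewrite val_quot_proj -{2}(addv_pi1_pi2 UZu) opprD addNKr.
by rewrite memvN memv_pi2.
Qed.

Lemma quot_proj_eq0 u : (u \in U + Z)%VS -> (quot_proj u == 0) = (u \in Z).
Proof.
move=> UZu; have Zdiff := val_quot_projB UZu.
apply/eqP/idP => [pi_u0 | Zu]; first by move: Zdiff; rewrite pi_u0 sub0r memvN.
apply/subvs_inj/eqP; rewrite linear0 -memv0 -(capv_diff U Z) memv_cap subvsP.
by rewrite -(subrK u (vsval _)) memvD.
Qed.

Lemma val_quot_proj_mem (w : subvs_of (U :\: Z)) : vsval w \in U.
Proof. exact: subvP (diffvSl U Z) _ (subvsP w). Qed.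

End ComplementProjection.

Section LieAlgebra.
Variables (R : fieldType) (V : vectType R) (br : V -> V -> V).
Hypothesis lie : is_lie_bracket br.

Lemma br_is_linear x : linear (br x).
Proof. by case: lie => -[_ brZDr] _ _ a y z; rewrite brZDr. Qed.
HB.instance Definition _ x :=
  GRing.isLinear.Build R V V *:%R (br x) (br_is_linear x).

Lemma brZDl a x y z : br (a *: x + y) z = a *: br x z + br y z.
Proof. by case: lie => -[brZDl _] _ _; apply: brZDl. Qed.

Lemma brDl x y z : br (x + y) z = br x z + br y z.
Proof. by have := brZDl 1 x y z; rewrite !scale1r. Qed.

Lemma brC x y : br x y = - br y x.
Proof.
case: lie => _ brxx _; apply/eqP; rewrite -addr_eq0.
by have := brxx (x + y); rewrite brDl !linearD /= !brxx add0r addr0 => ->.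
Qed.

Lemma brNl x y : br (- x) y = - br x y.
Proof. by rewrite brC linearN opprK; apply: brC. Qed.

Definition ad x : 'End(V) := linfun (br x).

Lemma ad_is_linear : linear ad.
Proof.
move=> a x y; apply/lfunP => z.
by rewrite add_lfunE scale_lfunE !lfunE /= brZDl.
Qed.
HB.instance Definition _ :=
  GRing.isLinear.Build R V 'End(V) *:%R ad ad_is_linear.

Definition lie_center : {vspace V} := lker (linfun ad).

Lemma mem_lie_center x : reflect (in_center br x) (x \in lie_center).
Proof.
rewrite memv_ker lfunE; apply: (iffP eqP) => [ad0 y | cx].
  by rewrite -(lfunE (br x)) -/(ad x) ad0 zero_lfunE.
by apply/lfunP => y; rewrite lfunE zero_lfunE /= cx.
Qed.

Lemma in_center_brr z : in_center br z -> forall x, br x z = 0.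
Proof. by move=> cz x; rewrite brC cz oppr0. Qed.

Section AbelianComplexStructure.
Variable J : V -> V.
Hypothesis acs : abelian_complex_structure br J.

Lemma J_is_linear : linear J.
Proof. by case: acs => J_lin _ _ a x y; rewrite J_lin. Qed.
HB.instance Definition _ := GRing.isLinear.Build R V V *:%R J J_is_linear.

Lemma JJ x : J (J x) = - x. Proof. by case: acs. Qed.
Lemma brJJ x y : br (J x) (J y) = br x y. Proof. by case: acs. Qed.

Lemma brJC x y : br (J x) y = br (J y) x.
Proof. by rewrite -brJJ JJ brNl brC opprK. Qed.

Lemma in_centerJ z : in_center br z -> in_center br (J z).
Proof. by move=> cz y; rewrite brJC; apply: in_center_brr. Qed.

Lemma brJ_lcomm x y z :
  br x y = 0 -> br (J x) (br (J y) z) = br (J y) (br (J x) z).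
Proof.
case: lie => _ _ jacobi xy0; apply/eqP; rewrite -subr_eq0.
have := jacobi (J x) (J y) z; rewrite brJJ xy0 linear0 addr0.
by rewrite [br z _]brC linearN /= => ->.
Qed.

Section AbelianIdeal.
Variable U : {vspace V}.
Hypotheses (ideal : abelian_ideal br U)
  (spanning : forall x,
     exists2 u1, u1 \in U & exists2 u2, u2 \in U & x = u1 + J u2).

Lemma brUU u v : u \in U -> v \in U -> br u v = 0.
Proof. by case: ideal => UU _; apply: UU. Qed.

Lemma memv_brU x u : u \in U -> br x u \in U.
Proof. by case: ideal => _; apply. Qed.

Lemma in_center_idealP u : u \in U -> (forall v, v \in U -> br (J v) u = 0) ->
  in_center br u.
Proof.
move=> Uu JU_u x; have [v1 Uv1 [v2 Uv2 ->]] := spanning x.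
by rewrite linearD /= brUU // add0r brC JU_u ?oppr0.
Qed.

Lemma in_center_decomp u1 u2 : u1 \in U -> u2 \in U ->
  in_center br (u1 + J u2) -> in_center br u1 /\ in_center br u2.
Proof.
move=> Uu1 Uu2 c12; split; apply: in_center_idealP => // v Uv.
  have := c12 (J v); rewrite brDl brJJ (brUU Uu2 Uv) addr0 brC => /eqP.
  by rewrite oppr_eq0 => /eqP.
by have := c12 v; rewrite brDl (brUU Uu1 Uv) add0r brJC.
Qed.

Definition center_ideal : {vspace V} := (U :&: lie_center)%VS.

Lemma center_idealP u :
  reflect (u \in U /\ in_center br u) (u \in center_ideal).
Proof.
by apply: (iffP memv_capP) => -[Uu cu]; split=> //; apply/mem_lie_center.
Qed.

Local Notation A := (subvs_of (U :\: center_ideal)).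
Local Notation pi := (quot_proj U center_ideal).

Lemma pi_eq0 u : u \in U -> pi u = 0 <-> in_center br u.
Proof.
move=> Uu; have UZu := subvP (addvSl U center_ideal) u Uu.
split=> [/eqP | cu]; first by rewrite quot_proj_eq0 // => /center_idealP [].
by apply/eqP; rewrite quot_proj_eq0 //; apply/center_idealP.
Qed.

Lemma val_pi_central u : u \in U ->
  exists2 k, in_center br k & vsval (pi u) = u + k.
Proof.
move=> Uu; exists (vsval (pi u) - u); last by rewrite addrC subrK.
have UZu := subvP (addvSl U center_ideal) u Uu.
by have /center_idealP [] := val_quot_projB UZu.
Qed.

Definition aff_mul (a b : A) : A := pi (br (J (vsval a)) (vsval b)).

Lemma aff_mul_pi u v : u \in U -> v \in U ->
  aff_mul (pi u) (pi v) = pi (br (J u) v).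
Proof.
move=> Uu Uv; rewrite /aff_mul.
have [k1 c1 ->] := val_pi_central Uu; have [k2 c2 ->] := val_pi_central Uv.
rewrite [J (u + _)]linearD brDl (in_centerJ c1) addr0 linearD /=.
by rewrite (in_center_brr c2) addr0.
Qed.

Lemma aff_mul_comm_assoc : is_comm_assoc_product aff_mul.
Proof.
split=> [|a b|a b c]; first split=> a x y z.
- by rewrite /aff_mul !linearP /= brZDl linearP.
- by rewrite /aff_mul !linearP.
- by rewrite /aff_mul brJC.
rewrite -(quot_proj_val a) -(quot_proj_val b) -(quot_proj_val c).
have Ua := val_quot_proj_mem a; have Ub := val_quot_proj_mem b.
have Uc := val_quot_proj_mem c.
rewrite !aff_mul_pi ?memv_brU //.
by rewrite [br (J (br _ _)) _]brJC (brJ_lcomm _ (brUU Uc Ua)) (brJC (vsval c)).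
Qed.

Lemma spanning_pair x :
  exists p : V * V, [&& p.1 \in U, p.2 \in U & x == p.1 + J p.2].
Proof.
by have [u1 Uu1 [u2 Uu2 ->]] := spanning x; exists (u1, u2); rewrite Uu1 Uu2 /=.
Qed.

Definition aff_coords x : A * A :=
  let p := xchoose (spanning_pair x) in (pi p.2, pi p.1).

Lemma pi_decomp_uniq u1 u2 v1 v2 :
  u1 \in U -> u2 \in U -> v1 \in U -> v2 \in U ->
  u1 + J u2 = v1 + J v2 -> pi u1 = pi v1 /\ pi u2 = pi v2.
Proof.
move=> Uu1 Uu2 Uv1 Uv2 eq_uv.
have c0 : in_center br ((u1 - v1) + J (u2 - v2)).
  by rewrite linearB addrACA -opprD eq_uv subrr => y; rewrite brC linear0 oppr0.
have [c1 c2] := in_center_decomp (memvB Uu1 Uv1) (memvB Uu2 Uv2) c0.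
by split; apply/eqP; rewrite -subr_eq0 -linearB;
  apply/eqP/pi_eq0; rewrite ?memvB.
Qed.

Lemma aff_coordsE u1 u2 : u1 \in U -> u2 \in U ->
  aff_coords (u1 + J u2) = (pi u2, pi u1).
Proof.
move=> Uu1 Uu2; rewrite /aff_coords.
have /and3P [Up1 Up2 /eqP eq_p] := xchooseP (spanning_pair (u1 + J u2)).
by have [<- <-] := pi_decomp_uniq Up1 Up2 Uu1 Uu2 (esym eq_p).
Qed.

Lemma aff_coords_is_linear : linear aff_coords.
Proof.
move=> a x y; have [x1 Ux1 [x2 Ux2 ->]] := spanning x.
have [y1 Uy1 [y2 Uy2 ->]] := spanning y.
have -> : a *: (x1 + J x2) + (y1 + J y2) = (a *: x1 + y1) + J (a *: x2 + y2).
  by rewrite linearP scalerDr addrACA.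
by rewrite !aff_coordsE ?rpredD ?rpredZ // !linearP.
Qed.

Lemma aff_coords_surj p : exists x, aff_coords x = p.
Proof.
case: p => a b; exists (vsval b + J (vsval a)).
by rewrite aff_coordsE ?val_quot_proj_mem // !quot_proj_val.
Qed.

Lemma aff_coords_eq0 x : aff_coords x = 0 <-> in_center br x.
Proof.
have [u1 Uu1 [u2 Uu2 ->]] := spanning x; rewrite aff_coordsE //.
split=> [[/(pi_eq0 Uu2) c2 /(pi_eq0 Uu1) c1] y | /in_center_decomp [] // c1 c2].
  by rewrite brDl c1 (in_centerJ c2) addr0.
by rewrite (pi_eq0 Uu1).2 // (pi_eq0 Uu2).2.
Qed.

Lemma aff_coords_br x y :
  aff_coords (br x y) = aff_bracket aff_mul (aff_coords x) (aff_coords y).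
Proof.
have [u1 Uu1 [u2 Uu2 ->]] := spanning x.
have [v1 Uv1 [v2 Uv2 ->]] := spanning y.
have -> : br (u1 + J u2) (v1 + J v2) = (br (J u2) v1 - br (J v2) u1) + J 0.
  rewrite linear0 addr0 brDl !linearD /= brJJ (brUU Uu1 Uv1) (brUU Uu2 Uv2).
  by rewrite add0r addr0 addrC [br u1 _]brC brJC.
rewrite !aff_coordsE ?rpred0 ?rpredB ?memv_brU //.
by rewrite /aff_bracket /= linear0 linearB !aff_mul_pi.
Qed.

Lemma aff_coordsJ x : aff_coords (J x) = J_aff (aff_coords x).
Proof.
have [u1 Uu1 [u2 Uu2 ->]] := spanning x.
by rewrite linearD /= JJ addrC !aff_coordsE ?rpredN // /J_aff /= linearN.
Qed.

End AbelianIdeal.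

End AbelianComplexStructure.

End LieAlgebra.

Theorem mainTheorem2 (R : realType) (V : vectType R) (br : V -> V -> V)
  (J : V -> V) (U : {vspace V}) :
  is_lie_bracket br ->
  lie_solvable br ->
  abelian_complex_structure br J ->
  abelian_ideal br U ->
  (forall x : V, exists2 u1, u1 \in U & exists2 u2, u2 \in U & x = u1 + J u2) ->
  exists (A : vectType R) (m : A -> A -> A) (f : V -> A * A),
    is_comm_assoc_product m /\
    [/\ (forall (a : R) (x y : V), f (a *: x + y) = a *: f x + f y),
        (forall p : A * A, exists x, f x = p),
        (forall x, f x = 0 <-> in_center br x),
        (forall x y, f (br x y) = aff_bracket m (f x) (f y)) &
        (forall x, f (J x) = J_aff (f x))].
Proof.
move=> lie _ acs ideal spanning.
exists _, (@aff_mul _ _ br J U), (aff_coords br J spanning).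
split; first exact: aff_mul_comm_assoc.
split.
- exact: aff_coords_is_linear.
- exact: aff_coords_surj.
- exact: aff_coords_eq0.
- exact: aff_coords_br.
- exact: aff_coordsJ.
Qed.
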